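(* Let $\mathbb K=\mathbb R$ and let $X=\varprojlim X_np_n$, $q_1\colon X_1\to\mathbb R$ (increasing, superlinear), $q=q_1\circ\operatorname{pr}_1$, the vector subspace $X_0\subset X$, the convex cone $H\subset X$ and $H_n=\operatorname{pr}_nH$ satisfy conditions (i), (ii), (v) below, together with condition (iii–iv): (i) for each $n$, $H_n$ contains a vector $\le_n0$; (ii) for each $n$, $H_n$ is minorizing for $\operatorname{pr}_nX_0$; (v) for every decreasing sequence $(h^{(k)})\subset H$ with $\inf_kq(h^{(k)})\in\mathbb R$, the sequence is bounded below in $X$ and $q(\inf_kh^{(k)})\ge\inf_kq(h^{(k)})$; (iii–iv) for every sequence $(h^{(k)})\subset H$ bounded (above and below) in $X$, $\limsup_kh^{(k)}:=\inf_n\sup_{k\ge n}h^{(k)}$ exists in $X$ and belongs to $H$. Then $\mathrm{spf}_{H,q}$ takes values in $\mathbb R\cup\{-\infty\}$, is superadditive and positively homogeneous, and for all $x\in X_0$ $$\mathrm{spf}_{H,q}(x)=\inf\{l(x):\ l\in L,\ q(h)\le l(x')\ \text{for all }h\in H,\ x'\in X_0,\ h\le x'\}$$ with $L$ the space of all linear functions $X_0\to\mathbb R$. If $H$ contains a vector $h\le0$ of $X$, then $\mathrm{spf}_{H,q}$ is superlinear and positive and $L$ may be replaced by the set of positive linear functions on $X_0$ (those with $l(x)\ge0$ for $x\in X_0$, $x\ge0$).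
   Context: All vector spaces are real. Projective limit: for ordered vector spaces $(X_n,\le_n)$ and positive linear $p_n\colon X_{n+1}\to X_n$, $X=\varprojlim X_np_n=\{x=(x_n)\in\prod X_n:\ x_n=p_n(x_{n+1})\ \forall n\}$ with coordinatewise order, $\operatorname{pr}_nx=x_n$; the limit is assumed reduced ($\operatorname{pr}_nX=X_n$) and regular (all $X_n$ vector lattices, each $p_n$ preserving suprema of finite sets). A set $G\subset X_n$ is minorizing for $Y\subset X_n$ if for each $y\in Y$ there is $g\in G$ with $g\le_ny$. Supremal function: $\mathrm{spf}_{H,q}(x)=\sup\{q(h):\ h\in H,\ h\le x\}$, $\sup\varnothing=-\infty$. Superlinear: superadditive, $g(tx)=tg(x)$ for $t>0$, $g(0)$ finite. *)

From Stdlib Require Import Reals ClassicalEpsilon.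
Open Scope R_scope.

Record VL := {
  car :> Type;
  vzero : car;
  vadd : car -> car -> car;
  vopp : car -> car;
  vscal : R -> car -> car;
  vle : car -> car -> Prop;
  vjoin : car -> car -> car;
  vaddA : forall a b c, vadd a (vadd b c) = vadd (vadd a b) c;
  vaddC : forall a b, vadd a b = vadd b a;
  vadd0 : forall a, vadd vzero a = a;
  vaddN : forall a, vadd (vopp a) a = vzero;
  vscalA : forall s t a, vscal s (vscal t a) = vscal (s * t) a;
  vscal1 : forall a, vscal 1 a = a;
  vscalDr : forall t a b, vscal t (vadd a b) = vadd (vscal t a) (vscal t b);
  vscalDl : forall s t a, vscal (s + t) a = vadd (vscal s a) (vscal t a);
  vle_refl : forall a, vle a a;
  vle_antisym : forall a b, vle a b -> vle b a -> a = b;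
  vle_trans : forall a b c, vle a b -> vle b c -> vle a c;
  vle_add : forall a b c, vle a b -> vle (vadd a c) (vadd b c);
  vle_scal : forall t a b, 0 <= t -> vle a b -> vle (vscal t a) (vscal t b);
  vjoin_l : forall a b, vle a (vjoin a b);
  vjoin_r : forall a b, vle b (vjoin a b);
  vjoin_lub : forall a b c, vle a c -> vle b c -> vle (vjoin a b) c
}.

Arguments vzero {_}. Arguments vadd {_}. Arguments vopp {_}.
Arguments vscal {_}. Arguments vle {_}. Arguments vjoin {_}.

(** Connecting maps p_n : X_{n+1} -> X_n : linear, positive, preserving
    (binary, hence finite nonempty) suprema. Indices start at 0. *)
Definition regular_system (Xs : nat -> VL) (p : forall n, Xs (S n) -> Xs n) : Prop :=
  forall n,
    (forall a b : Xs (S n), p n (vadd a b) = vadd (p n a) (p n b)) /\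
    (forall (t : R) (a : Xs (S n)), p n (vscal t a) = vscal t (p n a)) /\
    (forall a : Xs (S n), vle vzero a -> vle vzero (p n a)) /\
    (forall a b : Xs (S n), p n (vjoin a b) = vjoin (p n a) (p n b)).

Definition Prod (Xs : nat -> VL) := forall n, Xs n.

Section Lim.
Variable Xs : nat -> VL.
Variable p : forall n, Xs (S n) -> Xs n.

Definition inLim (x : Prod Xs) : Prop := forall n, x n = p n (x (S n)).

Definition reduced : Prop :=
  forall n (y : Xs n), exists x, inLim x /\ x n = y.

Definition pzero : Prod Xs := fun n => vzero.
Definition padd (x y : Prod Xs) : Prod Xs := fun n => vadd (x n) (y n).
Definition pscal (t : R) (x : Prod Xs) : Prod Xs := fun n => vscal t (x n).
Definition ple (x y : Prod Xs) : Prop := forall n, vle (x n) (y n).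

Definition is_infX (S : Prod Xs -> Prop) (g : Prod Xs) : Prop :=
  inLim g /\ (forall s, S s -> ple g s) /\
  (forall b, inLim b -> (forall s, S s -> ple b s) -> ple b g).
Definition is_supX (S : Prod Xs -> Prop) (g : Prod Xs) : Prop :=
  inLim g /\ (forall s, S s -> ple s g) /\
  (forall b, inLim b -> (forall s, S s -> ple s b) -> ple g b).

Definition subspace (X0 : Prod Xs -> Prop) : Prop :=
  (forall x, X0 x -> inLim x) /\ X0 pzero /\
  (forall x y, X0 x -> X0 y -> X0 (padd x y)) /\
  (forall t x, X0 x -> X0 (pscal t x)).

Definition convex_cone (H : Prod Xs -> Prop) : Prop :=
  (forall h, H h -> inLim h) /\
  (forall h k, H h -> H k -> H (padd h k)) /\
  (forall t h, 0 < t -> H h -> H (pscal t h)).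

Definition linear_on (X0 : Prod Xs -> Prop) (l : Prod Xs -> R) : Prop :=
  (forall x y, X0 x -> X0 y -> l (padd x y) = l x + l y) /\
  (forall t x, X0 x -> l (pscal t x) = t * l x).

Definition positive_on (X0 : Prod Xs -> Prop) (l : Prod Xs -> R) : Prop :=
  forall x, X0 x -> ple pzero x -> 0 <= l x.
End Lim.

Arguments inLim {Xs}. Arguments pzero {Xs}. Arguments padd {Xs}.
Arguments pscal {Xs}. Arguments ple {Xs}. Arguments is_infX {Xs}.
Arguments is_supX {Xs}.

Inductive ER := Fin (r : R) | MInf | PInf.

Definition ERle (a b : ER) : Prop :=
  match a, b with
  | MInf, _ => True
  | _, PInf => True
  | Fin x, Fin y => x <= y
  | _, _ => False
  end.

(** -oo absorbing (the case +oo + -oo never arises below) *)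
Definition ERplus (a b : ER) : ER :=
  match a, b with
  | Fin x, Fin y => Fin (x + y)
  | MInf, _ | _, MInf => MInf
  | _, _ => PInf
  end.

Definition ERscal (t : R) (a : ER) : ER :=
  match a with Fin x => Fin (t * x) | e => e end.

Definition ERopp (a : ER) : ER :=
  match a with Fin x => Fin (- x) | MInf => PInf | PInf => MInf end.

(** sup of a set of reals in the extended reals; sup of empty set = -oo *)
Definition ERsup (E : R -> Prop) : ER :=
  match excluded_middle_informative (exists r, E r) with
  | left ne =>
      match excluded_middle_informative (bound E) with
      | left b => Fin (proj1_sig (completeness E b ne))
      | right _ => PInf
      end
  | right _ => MInf
  end.

(** inf of a set of reals; inf of empty set = +oo *)
Definition ERinf (E : R -> Prop) : ER := ERopp (ERsup (fun r => E (- r))).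

Definition is_glb (E : R -> Prop) (m : R) : Prop :=
  (forall x, E x -> m <= x) /\ (forall b, (forall x, E x -> b <= x) -> b <= m).

Definition spf {Xs : nat -> VL} (H : Prod Xs -> Prop) (q : Prod Xs -> R)
  (x : Prod Xs) : ER :=
  ERsup (fun r => exists h, H h /\ ple h x /\ r = q h).

From Stdlib Require Import Reals ClassicalEpsilon.
From Stdlib Require Import Lra Lia Classical FunctionalExtensionality.
From mathcomp Require classical_sets.
Open Scope R_scope.

(* The duality formula rests on a separation step: if
   [q h < r] for every [H ∋ h <= x ∈ X0], there is an admissible linear [l] on
   [X0] with [l x <= r].
   - Compactness: by (iii–iv) the cone [H] is closed under finite joins and
     contains the suprema and infima of bounded monotone sequences; with (v)
     this shows that [q h < r] already holds for all [h ∈ H] with [h_n <= x_n],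
     for a single coordinate [n].
   - For that [n], [z ↦ - sup { q h : h ∈ H, h_n <= z_n }] is a real-valued
     sublinear functional on [X0] by (ii); a linear minorant touching it at [x]
     (Hahn–Banach, derived from Zorn's lemma) gives [l]. *)

Lemma ERsup_empty (E : R -> Prop) : ~ (exists r, E r) -> ERsup E = MInf.
Proof.
intros Hne. unfold ERsup.
destruct (excluded_middle_informative (exists r, E r)); tauto.
Qed.

Lemma ERsup_fin (E : R -> Prop) (M : R) :
  (exists r, E r) -> (forall r, E r -> r <= M) ->
  exists s, ERsup E = Fin s /\ is_lub E s.
Proof.
intros Hne HM. unfold ERsup.
destruct (excluded_middle_informative (exists r, E r)) as [ne|ne]; [|tauto].
destruct (excluded_middle_informative (bound E)) as [b|b].
- destruct (completeness E b ne) as [s Hs]. exists s. auto.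
- exfalso. apply b. exists M. exact HM.
Qed.

Lemma ERsup_unbounded (E : R -> Prop) :
  (exists r, E r) -> (forall K, exists r, E r /\ K < r) -> ERsup E = PInf.
Proof.
intros Hne HK. unfold ERsup.
destruct (excluded_middle_informative (exists r, E r)) as [ne|ne]; [|tauto].
destruct (excluded_middle_informative (bound E)) as [[K HbK]|b]; [|reflexivity].
exfalso. destruct (HK K) as [r [Hr HKr]]. specialize (HbK r Hr). lra.
Qed.

Definition bounded_below (E : R -> Prop) : Prop := exists m, forall x, E x -> m <= x.

(** The infimum of a set of reals, meaningful when the set is nonempty and
    bounded below. *)
Definition Rinf (E : R -> Prop) : R :=
  match ERinf E with Fin m => m | _ => 0 end.

Lemma Rinf_glb (E : R -> Prop) :
  (exists x, E x) -> bounded_below E -> is_glb E (Rinf E).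
Proof.
intros [x0 Hx0] [m Hm]. unfold Rinf, ERinf.
destruct (ERsup_fin (fun r => E (- r)) (- m)) as [s [-> [Hub Hlub]]].
- exists (- x0). rewrite Ropp_involutive. exact Hx0.
- intros r Hr. specialize (Hm _ Hr). lra.
- simpl. split.
  + intros x Hx. assert (- x <= s) by (apply Hub; rewrite Ropp_involutive; exact Hx). lra.
  + intros b Hb. assert (s <= - b); [|lra].
    apply Hlub. intros r Hr. specialize (Hb _ Hr). lra.
Qed.

Lemma Rinf_le (E : R -> Prop) (x : R) : E x -> bounded_below E -> Rinf E <= x.
Proof. intros Hx Hb. exact (proj1 (Rinf_glb E (ex_intro _ x Hx) Hb) x Hx). Qed.

Lemma Rinf_ge (E : R -> Prop) (m : R) :
  (exists x, E x) -> (forall x, E x -> m <= x) -> m <= Rinf E.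
Proof. intros Hne Hm. exact (proj2 (Rinf_glb E Hne (ex_intro _ m Hm)) m Hm). Qed.

Lemma Rinf_add (E1 E2 : R -> Prop) (L : R) :
  (exists x, E1 x) -> (exists x, E2 x) ->
  (forall a b, E1 a -> E2 b -> L <= a + b) -> L <= Rinf E1 + Rinf E2.
Proof.
intros Hne1 Hne2 HL.
assert (H1 : forall b, E2 b -> L - b <= Rinf E1).
{ intros b Hb. apply Rinf_ge; auto. intros a Ha. specialize (HL a b Ha Hb). lra. }
assert (L - Rinf E1 <= Rinf E2).
{ apply Rinf_ge; auto. intros b Hb. specialize (H1 b Hb). lra. }
lra.
Qed.

Lemma Rle_scale_l (t a b : R) : 0 < t -> (t * a <= b <-> a <= / t * b).
Proof.
intros Ht. split; intros Hab.
- replace a with (/ t * (t * a)) by (field; lra).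
  apply Rmult_le_compat_l; [apply Rlt_le, Rinv_0_lt_compat|]; lra.
- replace b with (t * (/ t * b)) by (field; lra). apply Rmult_le_compat_l; lra.
Qed.

Lemma Rle_scale_r (t a b : R) : 0 < t -> (a <= t * b <-> / t * a <= b).
Proof.
intros Ht. split; intros Hab.
- replace b with (/ t * (t * b)) by (field; lra).
  apply Rmult_le_compat_l; [apply Rlt_le, Rinv_0_lt_compat|]; lra.
- replace a with (t * (/ t * a)) by (field; lra). apply Rmult_le_compat_l; lra.
Qed.

Lemma Rinf_scale (E F : R -> Prop) (t : R) :
  0 < t -> (exists x, E x) -> bounded_below E ->
  (forall a, E a -> F (t * a)) -> (forall b, F b -> E (/ t * b)) ->
  Rinf F = t * Rinf E.
Proof.
intros Ht [x0 Hx0] HbE HEF HFE.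
assert (HbF : bounded_below F).
{ destruct HbE as [m Hm]. exists (t * m). intros b Hb.
  apply (Rle_scale_l t); auto. }
apply Rle_antisym.
- apply (Rle_scale_r t); auto. apply Rinf_ge; [exists x0; exact Hx0|].
  intros a Ha. apply (Rle_scale_r t); auto. apply Rinf_le; auto.
- apply Rinf_ge; [exists (t * x0); auto|].
  intros b Hb. apply (Rle_scale_l t); auto. apply Rinf_le; auto.
Qed.

Lemma is_lub_scale (E F : R -> Prop) (t s : R) :
  0 < t -> is_lub E s ->
  (forall a, E a -> F (t * a)) -> (forall b, F b -> E (/ t * b)) ->
  is_lub F (t * s).
Proof.
intros Ht [Hub Hlub] HEF HFE. split.
- intros b Hb. apply (Rle_scale_r t); auto.
- intros u Hu. apply (Rle_scale_l t); auto.
  apply Hlub. intros a Ha. apply (Rle_scale_l t); auto.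
Qed.

Lemma ERsup_eq_ERinf (E S : R -> Prop) (M : R) :
  (forall e, E e -> e <= M) ->
  (forall s e, S s -> E e -> e <= s) ->
  (forall r, (forall e, E e -> e < r) -> exists s, S s /\ s <= r) ->
  ERsup E = ERinf S.
Proof.
intros HM Hup Hsep. unfold ERinf.
destruct (classic (exists e, E e)) as [ne|ne].
- destruct (ERsup_fin E M ne HM) as [s [-> [Hs1 Hs2]]].
  assert (Hlb : forall u, S (- u) -> u <= - s).
  { intros u Hu. assert (s <= - u); [|lra].
    apply Hs2. intros e He. exact (Hup _ e Hu He). }
  assert (Hclose : forall eps, 0 < eps -> exists u, S (- u) /\ - s - eps <= u).
  { intros eps Heps. destruct (Hsep (s + eps)) as [σ [Hσ Hσle]].
    - intros e He. specialize (Hs1 e He). lra.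
    - exists (- σ). rewrite Ropp_involutive. split; [exact Hσ|lra]. }
  destruct (Hclose 1 Rlt_0_1) as [u0 [Hu0 _]].
  destruct (ERsup_fin (fun u => S (- u)) (- s) (ex_intro _ u0 Hu0) Hlb)
    as [t [-> [Ht1 Ht2]]].
  simpl. f_equal.
  assert (t <= - s) by (apply Ht2; exact Hlb).
  assert (- s <= t); [|lra].
  apply Rnot_lt_le. intros Hlt.
  destruct (Hclose ((- s - t) / 2)) as [u [Hu Hle]]; [lra|].
  specialize (Ht1 u Hu). lra.
- rewrite (ERsup_empty E ne), ERsup_unbounded; [reflexivity| |].
  + destruct (Hsep 0) as [σ [Hσ _]]; [intros e He; exfalso; eauto|].
    exists (- σ). rewrite Ropp_involutive. exact Hσ.
  + intros K. destruct (Hsep (- K - 1)) as [σ [Hσ1 Hσ2]]; [intros e He; exfalso; eauto|].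
    exists (- σ). rewrite Ropp_involutive. split; [exact Hσ1|lra].
Qed.

Lemma nonneg_of_scaled_bound (L a : R) : (forall t, 0 < t -> t * a <= L) -> 0 <= L.
Proof.
intros H. destruct (Rle_dec 0 L) as [|HL]; [assumption|exfalso].
destruct (Rle_dec 0 a) as [Ha|Ha].
- specialize (H 1 Rlt_0_1). lra.
- assert (Ht : 0 < L / (2 * a)).
  { replace (L / (2 * a)) with ((- L) / (- (2 * a))) by (field; lra).
    apply Rdiv_lt_0_compat; lra. }
  specialize (H _ Ht). replace (L / (2 * a) * a) with (L / 2) in H by (field; lra). lra.
Qed.

Lemma seq_choice (A : Type) (P : nat -> A -> Prop) :
  (forall n, exists a, P n a) -> exists f : nat -> A, forall n, P n (f n).
Proof.
intros HP. exists (fun n => proj1_sig (constructive_indefinite_description _ (HP n))).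
intros n. exact (proj2_sig (constructive_indefinite_description _ (HP n))).
Qed.

Section VectorLatticeAlgebra.
Variable V : VL.
Implicit Types a b c d : V.

Lemma vadd0r a : vadd a vzero = a.
Proof. rewrite vaddC. apply vadd0. Qed.

Lemma vadd_idem a : vadd a a = a -> a = vzero.
Proof.
intros Ha. assert (E : vadd (vopp a) (vadd a a) = vadd (vopp a) a) by (rewrite Ha; reflexivity).
rewrite vaddA, vaddN, vadd0 in E. exact E.
Qed.

Lemma vscal0 a : vscal 0 a = vzero.
Proof. apply vadd_idem. rewrite <- vscalDl. f_equal. ring. Qed.

Lemma vscalv0 t : vscal t (@vzero V) = vzero.
Proof. apply vadd_idem. rewrite <- vscalDr, vadd0. reflexivity. Qed.

Lemma vaddNr a : vadd a (vscal (-1) a) = vzero.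
Proof.
rewrite <- (vscal1 V a) at 1. rewrite <- vscalDl.
replace (1 + -1) with 0 by ring. apply vscal0.
Qed.

Lemma vaddNl a : vadd (vscal (-1) a) a = vzero.
Proof. rewrite vaddC. apply vaddNr. Qed.

Lemma vadd_swap a b c d : vadd (vadd a b) (vadd c d) = vadd (vadd a c) (vadd b d).
Proof. rewrite <- !vaddA. f_equal. rewrite !vaddA. f_equal. apply vaddC. Qed.

Lemma vle_add2 a b c d : vle a b -> vle c d -> vle (vadd a c) (vadd b d).
Proof.
intros Hab Hcd. apply vle_trans with (vadd b c); [apply vle_add; exact Hab|].
rewrite (vaddC V b c), (vaddC V b d). apply vle_add. exact Hcd.
Qed.

Lemma vle_opp a b : vle a b -> vle (vscal (-1) b) (vscal (-1) a).
Proof.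
intros Hab. apply (vle_add V a b (vadd (vscal (-1) a) (vscal (-1) b))) in Hab.
rewrite vaddA, vaddNr, vadd0 in Hab.
rewrite (vaddC V (vscal (-1) a)), vaddA, vaddNr, vadd0 in Hab. exact Hab.
Qed.

Lemma vopp_opp a : vscal (-1) (vscal (-1) a) = a.
Proof. rewrite vscalA. replace (-1 * -1) with 1 by ring. apply vscal1. Qed.

Lemma vjoin_eq_l a b : vle b a -> vjoin a b = a.
Proof.
intros Hba. apply vle_antisym; [apply vjoin_lub; [apply vle_refl|exact Hba]|apply vjoin_l].
Qed.

Lemma vjoin_eq_r a b : vle a b -> vjoin a b = b.
Proof.
intros Hab. apply vle_antisym; [apply vjoin_lub; [exact Hab|apply vle_refl]|apply vjoin_r].
Qed.

End VectorLatticeAlgebra.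

Definition pjoin {Xs : nat -> VL} (x y : Prod Xs) : Prod Xs := fun n => vjoin (x n) (y n).

Fixpoint pjoin_upto {Xs : nat -> VL} (f : nat -> Prod Xs) (M : nat) : Prod Xs :=
  match M with
  | O => f O
  | S M' => pjoin (pjoin_upto f M') (f M)
  end.

Section ProductSpace.
Context {Xs : nat -> VL}.
Implicit Types x y z : Prod Xs.

Ltac pointwise := apply functional_extensionality_dep; intro; unfold padd, pscal, pzero.

Lemma padd0r x : padd x pzero = x.
Proof. pointwise. apply vadd0r. Qed.

Lemma pscal0 x : pscal 0 x = pzero.
Proof. pointwise. apply vscal0. Qed.

Lemma pscal_zero t : pscal t (@pzero Xs) = pzero.
Proof. pointwise. apply vscalv0. Qed.

Lemma padd_opp x : padd x (pscal (-1) x) = pzero.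
Proof. pointwise. apply vaddNr. Qed.

Lemma padd_opp_one x : padd (pscal (-1) x) (pscal 1 x) = pzero.
Proof. pointwise. rewrite vscal1. apply vaddNl. Qed.

Lemma padd_oppK x y : padd (padd x y) (pscal (-1) y) = x.
Proof. pointwise. rewrite <- vaddA, vaddNr, vadd0r. reflexivity. Qed.

Lemma padd_ray_oppK x y t : padd (padd x (pscal t y)) (pscal (-1) x) = pscal t y.
Proof. pointwise. rewrite vaddC, vaddA, vaddNl, vadd0. reflexivity. Qed.

Lemma padd_rays x1 x2 y t1 t2 :
  padd (padd x1 (pscal t1 y)) (padd x2 (pscal t2 y)) = padd (padd x1 x2) (pscal (t1 + t2) y).
Proof. pointwise. rewrite vscalDl. apply vadd_swap. Qed.

Lemma pscal_ray s x y t : pscal s (padd x (pscal t y)) = padd (pscal s x) (pscal (s * t) y).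
Proof. pointwise. rewrite vscalDr, vscalA. reflexivity. Qed.

Lemma pscal_opp t x : pscal t x = pscal (- t) (pscal (-1) x).
Proof. pointwise. rewrite vscalA. f_equal. ring. Qed.

Lemma pscal_invK t x : t <> 0 -> pscal (/ t) (pscal t x) = x.
Proof. intros Ht. pointwise. rewrite vscalA, Rinv_l, vscal1; auto. Qed.

Lemma ple_refl x : ple x x.
Proof. intros n. apply vle_refl. Qed.

Lemma ple_trans x y z : ple x y -> ple y z -> ple x z.
Proof. intros Hxy Hyz n. eapply vle_trans; eauto. Qed.

Lemma ple_antisym x y : ple x y -> ple y x -> x = y.
Proof. intros Hxy Hyx. apply functional_extensionality_dep. intros n. apply vle_antisym; auto. Qed.

Lemma ple_add x y x' y' : ple x x' -> ple y y' -> ple (padd x y) (padd x' y').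
Proof. intros Hx Hy n. apply vle_add2; auto. Qed.

Lemma ple_scal t x y : 0 <= t -> ple x y -> ple (pscal t x) (pscal t y).
Proof. intros Ht Hxy n. apply vle_scal; auto. Qed.

Lemma pjoin_l x y : ple x (pjoin x y).
Proof. intros n. apply vjoin_l. Qed.

Lemma pjoin_r x y : ple y (pjoin x y).
Proof. intros n. apply vjoin_r. Qed.

Lemma pjoin_lub x y z : ple x z -> ple y z -> ple (pjoin x y) z.
Proof. intros Hx Hy n. apply vjoin_lub; auto. Qed.

Lemma pjoin_upto_ge (f : nat -> Prod Xs) M j : (j <= M)%nat -> ple (f j) (pjoin_upto f M).
Proof.
intros Hj. induction M as [|M IH]; simpl.
- replace j with O by lia. apply ple_refl.
- destruct (Nat.eq_dec j (S M)) as [->|Hne]; [apply pjoin_r|].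
  apply ple_trans with (pjoin_upto f M); [apply IH; lia|apply pjoin_l].
Qed.

Lemma pjoin_upto_lub (f : nat -> Prod Xs) M z :
  (forall j, (j <= M)%nat -> ple (f j) z) -> ple (pjoin_upto f M) z.
Proof.
intros Hz. induction M as [|M IH]; simpl; [apply Hz; lia|].
apply pjoin_lub; [apply IH; intros j Hj|]; apply Hz; lia.
Qed.

Lemma ple_increasing (f : nat -> Prod Xs) :
  (forall k, ple (f k) (f (S k))) -> forall k j, (k <= j)%nat -> ple (f k) (f j).
Proof. intros Hf k j Hkj. induction Hkj; [apply ple_refl|eapply ple_trans; eauto]. Qed.

Lemma ple_decreasing (f : nat -> Prod Xs) :
  (forall k, ple (f (S k)) (f k)) -> forall k j, (k <= j)%nat -> ple (f j) (f k).
Proof. intros Hf k j Hkj. induction Hkj; [apply ple_refl|eapply ple_trans; eauto]. Qed.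

End ProductSpace.

Lemma zorn_preorder (T : Type) (t0 : T) (Rl : T -> T -> Prop) :
  (forall t, Rl t t) -> (forall r s t, Rl r s -> Rl s t -> Rl r t) ->
  (forall A : T -> Prop, (forall s t, A s -> A t -> Rl s t \/ Rl t s) ->
     exists t, forall s, A s -> Rl s t) ->
  exists t, forall s, Rl t s -> Rl s t.
Proof.
intros Hrefl Htrans Hchain.
set (Rb := fun a b => if excluded_middle_informative (Rl a b) then true else false).
assert (E : forall a b, Rb a b = true <-> Rl a b).
{ intros a b. unfold Rb. destruct (excluded_middle_informative (Rl a b)); split; auto; discriminate. }
destruct (@classical_sets.ZL_preorder T t0 Rb) as [t Ht].
- intros a. apply E, Hrefl.
- intros r s u Hrs Hsu. apply E. apply E in Hrs. apply E in Hsu. eauto.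
- intros A HA. destruct (Hchain A) as [t Ht].
  + intros s u Hs Hu. destruct (HA s u Hs Hu) as [H|H]; [left|right]; apply E; exact H.
  + exists t. intros s Hs. apply E, Ht, Hs.
- exists t. intros s Hs. apply E, Ht, E, Hs.
Qed.

(** * Hahn–Banach: every sublinear functional on a subspace of [Prod Xs]
    dominates a linear one. *)

Definition vsubspace {Xs : nat -> VL} (V : Prod Xs -> Prop) : Prop :=
  V pzero /\ (forall x y, V x -> V y -> V (padd x y)) /\ (forall t x, V x -> V (pscal t x)).

Definition sublinear_on {Xs : nat -> VL} (V : Prod Xs -> Prop) (P : Prod Xs -> R) : Prop :=
  (forall x y, V x -> V y -> P (padd x y) <= P x + P y) /\
  (forall t x, 0 < t -> V x -> P (pscal t x) = t * P x).

(** [shift P y x = inf_{t >= 0} (P (x + t y) - t P y)] is sublinear and below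
    [P]; a minimal sublinear [P] therefore equals it, which makes [P] odd. *)
Definition shift {Xs : nat -> VL} (P : Prod Xs -> R) (y x : Prod Xs) : R :=
  Rinf (fun u => exists t, 0 <= t /\ u = P (padd x (pscal t y)) - t * P y).

Definition pointwise_inf {Xs : nat -> VL} {I : Type} (F : I -> Prod Xs -> R) (x : Prod Xs) : R :=
  Rinf (fun u => exists i, u = F i x).

Section HahnBanach.
Variables (Xs : nat -> VL) (V : Prod Xs -> Prop).
Hypothesis HV : vsubspace V.

Let V0 : V pzero := proj1 HV.
Let VA : forall x y, V x -> V y -> V (padd x y) := proj1 (proj2 HV).
Let VS : forall t x, V x -> V (pscal t x) := proj2 (proj2 HV).

Lemma sublinear_zero P : sublinear_on V P -> P pzero = 0.
Proof.
intros [_ Hhom]. pose proof (Hhom 2 pzero ltac:(lra) V0) as E.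
rewrite pscal_zero in E. lra.
Qed.

Lemma sublinear_hom P : sublinear_on V P ->
  forall t x, 0 <= t -> V x -> P (pscal t x) = t * P x.
Proof.
intros HP t x Ht Hx. destruct (Rle_lt_or_eq_dec 0 t Ht) as [Hpos|<-].
- apply (proj2 HP); auto.
- rewrite pscal0, (sublinear_zero P HP). ring.
Qed.

Lemma sublinear_opp P : sublinear_on V P -> forall x, V x -> - P (pscal (-1) x) <= P x.
Proof.
intros HP x Hx. pose proof (proj1 HP x (pscal (-1) x) Hx (VS _ _ Hx)) as E.
rewrite padd_opp, (sublinear_zero P HP) in E. lra.
Qed.

Lemma shift_bounded P y x : sublinear_on V P -> V y -> V x ->
  bounded_below (fun u => exists t, 0 <= t /\ u = P (padd x (pscal t y)) - t * P y).
Proof.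
intros HP Hy Hx. exists (- P (pscal (-1) x)). intros u [t [Ht ->]].
pose proof (proj1 HP _ _ (VA _ _ Hx (VS t _ Hy)) (VS (-1) _ Hx)) as E.
rewrite padd_ray_oppK, (sublinear_hom P HP t y Ht Hy) in E. lra.
Qed.

Lemma shift_le P y x t : sublinear_on V P -> V y -> V x -> 0 <= t ->
  shift P y x <= P (padd x (pscal t y)) - t * P y.
Proof.
intros HP Hy Hx Ht. apply Rinf_le; [exists t; auto|apply shift_bounded; auto].
Qed.

Lemma shift_le_self P y x : sublinear_on V P -> V y -> V x -> shift P y x <= P x.
Proof.
intros HP Hy Hx. pose proof (shift_le P y x 0 HP Hy Hx (Rle_refl 0)) as E.
rewrite pscal0, padd0r in E. lra.
Qed.

Lemma shift_sublinear P y : sublinear_on V P -> V y -> sublinear_on V (shift P y).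
Proof.
intros HP Hy.
assert (Hne : forall x, exists u, exists t, 0 <= t /\ u = P (padd x (pscal t y)) - t * P y).
{ intros x. eexists. exists 0. split; [lra|reflexivity]. }
split.
- intros x1 x2 H1 H2. unfold shift at 2 3. apply Rinf_add; auto.
  intros a b [t1 [Ht1 ->]] [t2 [Ht2 ->]].
  eapply Rle_trans; [apply (shift_le P y (padd x1 x2) (t1 + t2)); auto; lra|].
  rewrite <- padd_rays.
  pose proof (proj1 HP (padd x1 (pscal t1 y)) (padd x2 (pscal t2 y))
     (VA _ _ H1 (VS _ _ Hy)) (VA _ _ H2 (VS _ _ Hy))). lra.
- intros s x Hs Hx. unfold shift. apply Rinf_scale; auto; [apply shift_bounded; auto| |].
  + intros a [t [Ht ->]]. exists (s * t). split; [apply Rmult_le_pos; lra|].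
    rewrite <- pscal_ray, (proj2 HP s); auto. ring.
  + intros b [t [Ht ->]]. exists (/ s * t).
    split; [apply Rmult_le_pos; [apply Rlt_le, Rinv_0_lt_compat|]; lra|].
    rewrite <- (pscal_invK s x) at 2 by lra.
    rewrite <- pscal_ray, (proj2 HP (/ s)); [|apply Rinv_0_lt_compat; lra|].
    * replace (s * (/ s * t)) with t by (field; lra). ring.
    * apply VA; auto.
Qed.

Lemma chain_inf_sublinear (I : Type) (i0 : I) (F : I -> Prod Xs -> R) (P0 : Prod Xs -> R) :
  (forall i, sublinear_on V (F i) /\ forall x, V x -> F i x <= P0 x) ->
  (forall i j, (forall x, V x -> F i x <= F j x) \/ (forall x, V x -> F j x <= F i x)) ->
  sublinear_on V (pointwise_inf F) /\ (forall i x, V x -> pointwise_inf F x <= F i x).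
Proof.
intros HF Hchain.
assert (Hne : forall x, exists u, exists i, u = F i x) by (intros x; exists (F i0 x), i0; reflexivity).
assert (Hbd : forall x, V x -> bounded_below (fun u => exists i, u = F i x)).
{ intros x Hx. exists (- P0 (pscal (-1) x)). intros u [i ->]. destruct (HF i) as [Hsub Hdom].
  pose proof (sublinear_opp _ Hsub x Hx). pose proof (Hdom _ (VS (-1) x Hx)). lra. }
assert (Hlow : forall i x, V x -> pointwise_inf F x <= F i x).
{ intros i x Hx. apply Rinf_le; [exists i; reflexivity|auto]. }
split; [split|exact Hlow].
- intros x y Hx Hy. unfold pointwise_inf at 2 3. apply Rinf_add; auto.
  intros u v [i ->] [j ->].
  pose proof (proj1 (proj1 (HF i)) x y Hx Hy). pose proof (proj1 (proj1 (HF j)) x y Hx Hy).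
  destruct (Hchain i j) as [Hij|Hji].
  + pose proof (Hlow i (padd x y) (VA _ _ Hx Hy)). specialize (Hij y Hy). lra.
  + pose proof (Hlow j (padd x y) (VA _ _ Hx Hy)). specialize (Hji x Hx). lra.
- intros t x Ht Hx. unfold pointwise_inf. apply Rinf_scale; auto.
  + intros u [i ->]. exists i. symmetry. apply (proj1 (HF i)); auto.
  + intros u [i ->]. exists i. rewrite (proj2 (proj1 (HF i))); auto. field. lra.
Qed.

Lemma minimal_sublinear_linear P : sublinear_on V P ->
  (forall Q, sublinear_on V Q -> (forall x, V x -> Q x <= P x) -> forall x, V x -> P x <= Q x) ->
  linear_on Xs V P.
Proof.
intros HP Hmin.
assert (Hodd : forall y, V y -> P (pscal (-1) y) = - P y).
{ intros y Hy.
  assert (Hsh : P (pscal (-1) y) <= shift P y (pscal (-1) y)).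
  { apply Hmin; auto; [apply shift_sublinear; auto|].
    intros z Hz. apply shift_le_self; auto. }
  pose proof (shift_le P y (pscal (-1) y) 1 HP Hy (VS _ _ Hy) ltac:(lra)) as E.
  rewrite padd_opp_one, (sublinear_zero P HP) in E.
  pose proof (sublinear_opp P HP y Hy). lra. }
split.
- intros x y Hx Hy. pose proof (proj1 HP x y Hx Hy).
  pose proof (proj1 HP (padd x y) (pscal (-1) y) (VA _ _ Hx Hy) (VS _ _ Hy)) as E.
  rewrite padd_oppK, Hodd in E by auto. lra.
- intros t x Hx. destruct (Rlt_le_dec t 0) as [Ht|Ht].
  + rewrite (pscal_opp t x), (sublinear_hom P HP), Hodd; auto; [ring|lra].
  + apply sublinear_hom; auto.
Qed.

Lemma hahn_banach P0 : sublinear_on V P0 ->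
  exists g, linear_on Xs V g /\ forall x, V x -> g x <= P0 x.
Proof.
intros HP0.
set (T := {f : Prod Xs -> R | sublinear_on V f /\ forall x, V x -> f x <= P0 x}).
set (below := fun a b : T => forall x, V x -> proj1_sig b x <= proj1_sig a x).
assert (t0 : T) by (exists P0; split; [exact HP0|intros; lra]).
destruct (zorn_preorder T t0 below) as [[P [HP HPP0]] Hmin].
- intros a x _. lra.
- intros a b c Hab Hbc x Hx. specialize (Hab x Hx). specialize (Hbc x Hx). lra.
- intros A HA. destruct (classic (exists a, A a)) as [[a0 Ha0]|Hne].
  2:{ exists t0. intros s Hs. exfalso. eauto. }
  pose (F := fun i : {a : T | A a} => proj1_sig (proj1_sig i)).
  destruct (chain_inf_sublinear {a : T | A a} (exist _ a0 Ha0) F P0) as [Hinf Hle].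
  + intros i. exact (proj2_sig (proj1_sig i)).
  + intros [a Ha] [b Hb]. destruct (HA a b Ha Hb); [right|left]; auto.
  + assert (Hdom : forall x, V x -> pointwise_inf F x <= P0 x).
    { intros x Hx. apply Rle_trans with (F (exist _ a0 Ha0) x); [apply Hle; auto|].
      apply (proj2 (proj2_sig a0)); auto. }
    exists (exist _ (pointwise_inf F) (conj Hinf Hdom)).
    intros s Hs x Hx. exact (Hle (exist _ s Hs) x Hx).
- exists P. split; [|exact HPP0]. apply minimal_sublinear_linear; auto.
  intros Q HQ HQP x Hx.
  assert (HQ0 : forall x, V x -> Q x <= P0 x).
  { intros z Hz. pose proof (HQP z Hz). pose proof (HPP0 z Hz). lra. }
  exact (Hmin (exist _ Q (conj HQ HQ0)) HQP x Hx).
Qed.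

Lemma hahn_banach_at P x : sublinear_on V P -> V x ->
  exists g, linear_on Xs V g /\ (forall y, V y -> g y <= P y) /\ g x = P x.
Proof.
intros HP Hx.
destruct (hahn_banach (shift P x) (shift_sublinear P x HP Hx)) as [g [[gA gS] gle]].
assert (Hg : forall y, V y -> g y <= P y).
{ intros y Hy. eapply Rle_trans; [apply gle; auto|apply shift_le_self; auto]. }
exists g. split; [split; auto|split; [exact Hg|]].
apply Rle_antisym; [apply Hg; auto|].
pose proof (gS (-1) x Hx). pose proof (gle _ (VS (-1) x Hx)).
pose proof (shift_le P x (pscal (-1) x) 1 HP Hx (VS _ _ Hx) ltac:(lra)) as E.
rewrite padd_opp_one, (sublinear_zero P HP) in E. lra.
Qed.

End HahnBanach.

Definition limsup_closed {Xs : nat -> VL} (p : forall n, Xs (S n) -> Xs n)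
    (H : Prod Xs -> Prop) : Prop :=
  forall hk : nat -> Prod Xs,
    (forall k, H (hk k)) ->
    (exists a, inLim p a /\ forall k, ple (hk k) a) ->
    (exists b, inLim p b /\ forall k, ple b (hk k)) ->
    exists (s : nat -> Prod Xs) (g : Prod Xs),
      (forall n, is_supX p (fun y => exists k, (n <= k)%nat /\ y = hk k) (s n)) /\
      is_infX p (fun y => exists n, y = s n) g /\ H g.

Definition inf_stable {Xs : nat -> VL} (p : forall n, Xs (S n) -> Xs n)
    (H : Prod Xs -> Prop) (q1 : Xs 0%nat -> R) : Prop :=
  forall hk : nat -> Prod Xs,
    (forall k, H (hk k)) -> (forall k, ple (hk (S k)) (hk k)) ->
    forall m, is_glb (fun r => exists k, r = q1 (hk k 0%nat)) m ->
    (exists b, inLim p b /\ forall k, ple b (hk k)) /\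
    (forall g, is_infX p (fun s => exists k, s = hk k) g -> m <= q1 (g 0%nat)).

Definition admissible {Xs : nat -> VL} (H X0 : Prod Xs -> Prop) (q l : Prod Xs -> R) : Prop :=
  forall h x', H h -> X0 x' -> ple h x' -> q h <= l x'.

Section ProjectiveLimit.
Variables (Xs : nat -> VL) (p : forall n, Xs (S n) -> Xs n).
Hypothesis Hreg : regular_system Xs p.

Lemma p_join n (a b : Xs (S n)) : p n (vjoin a b) = vjoin (p n a) (p n b).
Proof. apply (Hreg n). Qed.

Lemma p_monotone n (a b : Xs (S n)) : vle a b -> vle (p n a) (p n b).
Proof. intros Hab. rewrite <- (vjoin_eq_r _ a b Hab), p_join. apply vjoin_l. Qed.

Lemma lim_coord_mono (h x : Prod Xs) n m : inLim p h -> inLim p x ->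
  vle (h n) (x n) -> (m <= n)%nat -> vle (h m) (x m).
Proof.
intros Hh Hx Hn Hm. induction Hm as [|n Hm IH]; [exact Hn|].
apply IH. rewrite (Hh n), (Hx n). apply p_monotone, Hn.
Qed.

Lemma lim_scal t x : inLim p x -> inLim p (pscal t x).
Proof. intros Hx n. unfold pscal. rewrite (proj1 (proj2 (Hreg n))), <- Hx. reflexivity. Qed.

Lemma lim_join x y : inLim p x -> inLim p y -> inLim p (pjoin x y).
Proof. intros Hx Hy n. unfold pjoin. rewrite p_join, <- Hx, <- Hy. reflexivity. Qed.

(** Given [x] and [f k] in [X] with [f k <= x] at coordinate [k], the element
    [envelope x f N] of [X] equals [x] at coordinate [N] and bounds every
    [f k], [k >= N]; its [m]-th coordinate is [x_m ∨ ⋁_{N <= k < m} (f k)_m]. *)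
Fixpoint envelope_upto (x : Prod Xs) (f : nat -> Prod Xs) (N m L : nat) : Xs m :=
  match L with
  | O => x m
  | S L' => if Nat.leb N L' then vjoin (envelope_upto x f N m L') (f L' m)
            else envelope_upto x f N m L'
  end.

Definition envelope (x : Prod Xs) (f : nat -> Prod Xs) (N : nat) : Prod Xs :=
  fun m => envelope_upto x f N m m.

Section Envelope.
Variables (x : Prod Xs) (f : nat -> Prod Xs) (N : nat).
Hypotheses (Lx : inLim p x) (Lf : forall k, inLim p (f k)) (Hfx : forall k, vle (f k k) (x k)).

Lemma envelope_upto_p m L : p m (envelope_upto x f N (S m) L) = envelope_upto x f N m L.
Proof.
induction L as [|L IH]; simpl; [symmetry; apply Lx|].
destruct (Nat.leb N L); [rewrite p_join, IH, <- (Lf L m); reflexivity|exact IH].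
Qed.

Lemma envelope_upto_ge_x m L : vle (x m) (envelope_upto x f N m L).
Proof.
induction L as [|L IH]; simpl; [apply vle_refl|].
destruct (Nat.leb N L); [eapply vle_trans; [exact IH|apply vjoin_l]|exact IH].
Qed.

Lemma envelope_upto_ge_f m L k : (N <= k < L)%nat -> vle (f k m) (envelope_upto x f N m L).
Proof.
intros Hk. induction L as [|L IH]; [lia|simpl].
assert (HN : Nat.leb N L = true) by (apply Nat.leb_le; lia). rewrite HN.
destruct (Nat.eq_dec k L) as [->|Hne]; [apply vjoin_r|].
eapply vle_trans; [apply IH; lia|apply vjoin_l].
Qed.

Lemma envelope_upto_below m L : (L <= N)%nat -> envelope_upto x f N m L = x m.
Proof.
intros HL. induction L as [|L IH]; simpl; [reflexivity|].
assert (HN : Nat.leb N L = false) by (apply Nat.leb_gt; lia). rewrite HN. apply IH. lia.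
Qed.

Lemma envelope_inLim : inLim p (envelope x f N).
Proof.
intros m. unfold envelope. simpl.
destruct (Nat.leb N m); [|symmetry; apply envelope_upto_p].
rewrite p_join, envelope_upto_p, <- (Lf m m). symmetry. apply vjoin_eq_l.
eapply vle_trans; [apply Hfx|apply envelope_upto_ge_x].
Qed.

Lemma envelope_ge k : (N <= k)%nat -> ple (f k) (envelope x f N).
Proof.
intros Hk m. unfold envelope. destruct (Nat.le_gt_cases m k) as [Hm|Hm].
- eapply vle_trans; [|apply envelope_upto_ge_x].
  apply (lim_coord_mono (f k) x k m); auto.
- apply envelope_upto_ge_f. lia.
Qed.

Lemma envelope_at : envelope x f N N = x N.
Proof. apply envelope_upto_below. lia. Qed.

End Envelope.

Section Cone.
Variable H : Prod Xs -> Prop.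
Hypothesis HH : convex_cone Xs p H.
Hypothesis Hlimsup : limsup_closed p H.

Lemma cone_inLim h : H h -> inLim p h.
Proof. apply HH. Qed.

(** [H] is closed under binary joins: [u ∨ v] is the [limsup] of [u, v, u, v, ...]. *)
Lemma cone_join u v : H u -> H v -> H (pjoin u v).
Proof.
intros Hu Hv.
assert (Lu := cone_inLim u Hu). assert (Lv := cone_inLim v Hv).
set (w := fun k : nat => if Nat.even k then u else v).
assert (Hw : forall k, w k = u \/ w k = v) by (intros k; unfold w; destruct (Nat.even k); auto).
assert (Hw_le : forall k, ple (w k) (pjoin u v)).
{ intros k. destruct (Hw k) as [->| ->]; [apply pjoin_l|apply pjoin_r]. }
destruct (Hlimsup w) as [s [g [Hs [[Lg [Hg1 Hg2]] Hg]]]].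
- intros k. destruct (Hw k) as [->| ->]; auto.
- exists (pjoin u v). split; [apply lim_join; auto|exact Hw_le].
-
  exists (pscal (-1) (pjoin (pscal (-1) u) (pscal (-1) v))).
  split; [apply lim_scal, lim_join; apply lim_scal; auto|].
  intros k n. unfold pscal, pjoin. destruct (Hw k) as [->| ->].
  + rewrite <- (vopp_opp _ (u n)) at 2. apply vle_opp, vjoin_l.
  + rewrite <- (vopp_opp _ (v n)) at 2. apply vle_opp, vjoin_r.
- replace (pjoin u v) with g; [exact Hg|].
  apply ple_antisym.
  + apply ple_trans with (s 0%nat); [apply Hg1; exists 0%nat; reflexivity|].
    apply (Hs 0%nat); [apply lim_join; auto|].
    intros y [k [_ ->]]. apply Hw_le.
  + apply Hg2; [apply lim_join; auto|]. intros y [n ->].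
    destruct (Hs n) as [_ [Hsn _]]. apply pjoin_lub.
    * apply Hsn. exists (2 * n)%nat. split; [lia|]. unfold w. rewrite Nat.even_even. reflexivity.
    * apply Hsn. exists (2 * n + 1)%nat. split; [lia|]. unfold w. rewrite Nat.even_odd. reflexivity.
Qed.

Lemma cone_pjoin_upto (f : nat -> Prod Xs) M : (forall k, H (f k)) -> H (pjoin_upto f M).
Proof. intros Hf. induction M as [|M IH]; simpl; [apply Hf|apply cone_join; auto]. Qed.

Lemma cone_sup_increasing (f : nat -> Prod Xs) (a : Prod Xs) :
  (forall k, H (f k)) -> (forall k, ple (f k) (f (S k))) ->
  inLim p a -> (forall k, ple (f k) a) ->
  exists g, H g /\ is_supX p (fun y => exists k, y = f k) g.
Proof.
intros Hf Hinc La Ha.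
assert (Hmono := ple_increasing f Hinc).
destruct (Hlimsup f Hf) as [s [g [Hs [[Lg [Hg1 Hg2]] Hg]]]].
- exists a. auto.
- exists (f 0%nat). split; [apply cone_inLim; auto|intros k; apply Hmono; lia].
- exists g. split; [exact Hg|]. split; [exact Lg|split].
  + intros y [M ->]. apply Hg2; [apply cone_inLim; auto|]. intros z [n ->].
    apply ple_trans with (f (Nat.max n M)); [apply Hmono; lia|].
    apply (Hs n). exists (Nat.max n M). split; [lia|reflexivity].
  + intros z Lz Hz. apply ple_trans with (s 0%nat); [apply Hg1; exists 0%nat; reflexivity|].
    apply (Hs 0%nat); auto. intros y [k [_ ->]]. apply Hz. exists k. reflexivity.
Qed.

Lemma cone_inf_decreasing (f : nat -> Prod Xs) (b : Prod Xs) :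
  (forall k, H (f k)) -> (forall k, ple (f (S k)) (f k)) ->
  inLim p b -> (forall k, ple b (f k)) ->
  exists g, H g /\ is_infX p (fun y => exists k, y = f k) g.
Proof.
intros Hf Hdec Lb Hb.
assert (Hmono := ple_decreasing f Hdec).
destruct (Hlimsup f Hf) as [s [g [Hs [[Lg [Hg1 Hg2]] Hg]]]].
- exists (f 0%nat). split; [apply cone_inLim; auto|intros k; apply Hmono; lia].
- exists b. auto.
- (* the supremum of the tail from [n] is [f n] *)
  assert (Hsf : forall n, ple (s n) (f n)).
  { intros n. apply (Hs n); [apply cone_inLim; auto|]. intros y [k [Hk ->]]. apply Hmono, Hk. }
  assert (Hfs : forall n, ple (f n) (s n)).
  { intros n. apply (Hs n). exists n. split; [lia|reflexivity]. }
  exists g. split; [exact Hg|]. split; [exact Lg|split].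
  + intros y [k ->]. apply ple_trans with (s k); [apply Hg1; exists k; reflexivity|apply Hsf].
  + intros z Lz Hz. apply Hg2; auto. intros y [n ->].
    apply ple_trans with (f n); [apply Hz; exists n; reflexivity|apply Hfs].
Qed.

(** Any sequence of [H] bounded above in [X] has its supremum in [H]: take the
    supremum of its finite joins. *)
Lemma cone_sup (f : nat -> Prod Xs) (a : Prod Xs) :
  (forall k, H (f k)) -> inLim p a -> (forall k, ple (f k) a) ->
  exists g, H g /\ is_supX p (fun y => exists k, y = f k) g.
Proof.
intros Hf La Ha.
destruct (cone_sup_increasing (pjoin_upto f) a) as [g [Hg [Lg [Hup Hleast]]]].
- intros M. apply cone_pjoin_upto, Hf.
- intros M. apply pjoin_l.
- exact La.
- intros M. apply pjoin_upto_lub. intros j _. apply Ha.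
- exists g. split; [exact Hg|]. split; [exact Lg|split].
  + intros y [k ->]. apply ple_trans with (pjoin_upto f k); [apply pjoin_upto_ge; lia|].
    apply Hup. exists k. reflexivity.
  + intros z Lz Hz. apply Hleast; auto. intros y [M ->].
    apply pjoin_upto_lub. intros j _. apply Hz. exists j. reflexivity.
Qed.

Variable q1 : Xs 0%nat -> R.
Hypothesis q1_incr : forall a b : Xs 0%nat, vle a b -> q1 a <= q1 b.
Hypothesis Hinf : inf_stable p H q1.

Lemma compactness (x : Prod Xs) (c : R) : inLim p x ->
  (forall n, exists h, H h /\ vle (h n) (x n) /\ c <= q1 (h 0%nat)) ->
  exists G, H G /\ ple G x /\ c <= q1 (G 0%nat).
Proof.
intros Lx Happrox.
destruct (seq_choice _ _ Happrox) as [f Hf].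
assert (Lf : forall k, inLim p (f k)) by (intros k; apply cone_inLim, Hf).
assert (Hfx : forall k, vle (f k k) (x k)) by (intros k; apply Hf).
(* [s N]: supremum in [H] of the tail [(f k)_{k >= N}], below [envelope x f N] *)
assert (Htail : forall N, exists s, H s /\ is_supX p (fun y => exists k, y = f (N + k)%nat) s).
{ intros N. apply (cone_sup (fun k => f (N + k)%nat) (envelope x f N)).
  - intros k. apply Hf.
  - apply envelope_inLim; auto.
  - intros k. apply envelope_ge; auto. lia. }
destruct (seq_choice _ _ Htail) as [s Hs].
assert (s_env : forall N, ple (s N) (envelope x f N)).
{ intros N. apply (Hs N); [apply envelope_inLim; auto|].
  intros y [k ->]. apply envelope_ge; auto. lia. }
assert (f_s : forall N, ple (f N) (s N)).
{ intros N. apply (Hs N). exists 0%nat. rewrite Nat.add_0_r. reflexivity. }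
assert (s_decr : forall N, ple (s (S N)) (s N)).
{ intros N. apply (Hs (S N)); [apply (Hs N)|].
  intros y [k ->]. apply (Hs N). exists (S k). f_equal. lia. }
assert (s_c : forall N, c <= q1 (s N 0%nat)).
{ intros N. apply Rle_trans with (q1 (f N 0%nat)); [apply Hf|apply q1_incr, f_s]. }
(* [G]: infimum in [H] of the decreasing sequence [s], controlled by (v) *)
set (Q := fun r => exists k, r = q1 (s k 0%nat)).
assert (HQ : is_glb Q (Rinf Q)).
{ apply Rinf_glb; [exists (q1 (s 0%nat 0%nat)), 0%nat; reflexivity|].
  exists c. intros r [k ->]. apply s_c. }
destruct (Hinf s (fun N => proj1 (Hs N)) s_decr (Rinf Q) HQ) as [[b [Lb Hb]] Hq_inf].
destruct (cone_inf_decreasing s b) as [G [HG HGinf]]; auto; [intros N; apply Hs|].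
exists G. split; [exact HG|split].
- intros N. apply vle_trans with (s N N); [apply HGinf; exists N; reflexivity|].
  rewrite <- (envelope_at x f N). apply s_env.
- apply Rle_trans with (Rinf Q); [apply (proj2 HQ); intros r [k ->]; apply s_c|].
  apply Hq_inf, HGinf.
Qed.

(** ** Separation.
    For [z ∈ X0], [coord_gauge n z = - sup { q h : h ∈ H, h_n <= z_n }]; by (ii)
    it is a real-valued sublinear functional on [X0]. *)
Definition coord_gauge (n : nat) (z : Prod Xs) : R :=
  Rinf (fun u => exists h, H h /\ vle (h n) (z n) /\ u = - q1 (h 0%nat)).

Hypothesis q1_supadd : forall a b : Xs 0%nat, q1 a + q1 b <= q1 (vadd a b).
Hypothesis q1_hom : forall (t : R) (a : Xs 0%nat), 0 < t -> q1 (vscal t a) = t * q1 a.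
Variable X0 : Prod Xs -> Prop.
Hypothesis HX0 : subspace Xs p X0.
Hypothesis Hii : forall n x, X0 x -> exists h, H h /\ vle (h n) (x n).

Lemma coord_gauge_nonempty n z : X0 z ->
  exists u, exists h, H h /\ vle (h n) (z n) /\ u = - q1 (h 0%nat).
Proof.
intros Hz. destruct (Hii n z Hz) as [h [Hh Hhz]]. exists (- q1 (h 0%nat)), h. auto.
Qed.

Lemma coord_gauge_bounded n z : X0 z ->
  bounded_below (fun u => exists h, H h /\ vle (h n) (z n) /\ u = - q1 (h 0%nat)).
Proof.
intros Hz. exists (- q1 (z 0%nat)). intros u [h [Hh [Hhz ->]]].
assert (Hh0 : vle (h 0%nat) (z 0%nat)).
{ apply (lim_coord_mono h z n); [apply cone_inLim; auto|apply HX0; auto|exact Hhz|lia]. }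
pose proof (q1_incr _ _ Hh0). lra.
Qed.

Lemma coord_gauge_le n h z : H h -> vle (h n) (z n) -> X0 z -> coord_gauge n z <= - q1 (h 0%nat).
Proof.
intros Hh Hhz Hz. apply Rinf_le; [exists h; auto|apply coord_gauge_bounded; auto].
Qed.

Lemma coord_gauge_sublinear n : sublinear_on X0 (coord_gauge n).
Proof.
destruct HH as [_ [HA HS]]. split.
- intros z w Hz Hw. unfold coord_gauge at 2 3.
  apply Rinf_add; try apply coord_gauge_nonempty; auto.
  intros a b [h [Hh [Hhz ->]]] [k [Hk [Hkw ->]]].
  eapply Rle_trans; [apply (coord_gauge_le n (padd h k)); auto|].
  + apply vle_add2; auto.
  + apply HX0; auto.
  + pose proof (q1_supadd (h 0%nat) (k 0%nat)). unfold padd. lra.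
- intros t z Ht Hz. unfold coord_gauge.
  apply Rinf_scale; auto; [apply coord_gauge_nonempty; auto|apply coord_gauge_bounded; auto| |].
  + intros a [h [Hh [Hhz ->]]]. exists (pscal t h). split; [apply HS; auto|split].
    * apply vle_scal; [lra|exact Hhz].
    * unfold pscal. rewrite q1_hom; auto. ring.
  + intros b [h [Hh [Hhz ->]]]. assert (Ht' : 0 < / t) by (apply Rinv_0_lt_compat; lra).
    exists (pscal (/ t) h). split; [apply HS; auto|split].
    * unfold pscal. rewrite <- (vscal1 _ (z n)), <- (Rinv_l t), <- vscalA by lra.
      apply vle_scal; [lra|exact Hhz].
    * unfold pscal. rewrite q1_hom; auto. ring.
Qed.

(** If [q h < r] for all [H ∋ h <= x], then by compactness already [q h < r]
    whenever [h_n <= x_n] for one [n]; Hahn–Banach applied to [coord_gauge n]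
    then yields an admissible linear [l] with [l x <= r]. *)
Lemma separation x r : X0 x -> (forall h, H h -> ple h x -> q1 (h 0%nat) < r) ->
  exists l, linear_on Xs X0 l /\ admissible H X0 (fun y => q1 (y 0%nat)) l /\ l x <= r.
Proof.
intros Hx Hr. pose proof HX0 as [XL [X00 [XA XS]]].
assert (Hn : exists n, forall h, H h -> vle (h n) (x n) -> q1 (h 0%nat) < r).
{ apply NNPP. intros Hnot.
  destruct (compactness x r (XL x Hx)) as [G [HG [HGx HGr]]].
  - intros n. apply NNPP. intros Hno. apply Hnot. exists n. intros h Hh Hhn.
    apply Rnot_le_lt. intros Hle. apply Hno. exists h. auto.
  - specialize (Hr G HG HGx). lra. }
destruct Hn as [n Hn].
destruct (hahn_banach_at Xs X0 (conj X00 (conj XA XS)) (coord_gauge n) x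
            (coord_gauge_sublinear n) Hx) as [g [[gA gS] [gle gx]]].
exists (fun z => - g z). split; [split|split].
- intros z w Hz Hw. rewrite gA; auto. ring.
- intros t z Hz. rewrite gS; auto. ring.
- intros h x' Hh Hx' Hhx'. pose proof (gle x' Hx'). pose proof (coord_gauge_le n h x' Hh (Hhx' n) Hx').
  lra.
- assert (- r <= coord_gauge n x); [|lra].
  apply Rinf_ge; [apply coord_gauge_nonempty; auto|].
  intros u [h [Hh [Hhx ->]]]. specialize (Hn h Hh Hhx). lra.
Qed.

End Cone.

End ProjectiveLimit.

Section SupremalFunction.
Variables (Xs : nat -> VL) (H : Prod Xs -> Prop) (q : Prod Xs -> R).
Hypothesis q_incr : forall h x, ple h x -> q h <= q x.

Definition feasible (x : Prod Xs) (r : R) : Prop := exists h, H h /\ ple h x /\ r = q h.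

Lemma spf_cases x :
  (~ (exists r, feasible x r) /\ spf H q x = MInf) \/
  (exists s, spf H q x = Fin s /\ is_lub (feasible x) s /\ exists r, feasible x r).
Proof.
destruct (classic (exists r, feasible x r)) as [ne|ne].
- right. destruct (ERsup_fin (feasible x) (q x) ne) as [s [Hs Hlub]].
  + intros r [h [_ [Hhx ->]]]. apply q_incr, Hhx.
  + exists s. auto.
- left. split; [exact ne|]. apply ERsup_empty, ne.
Qed.

Lemma spf_not_PInf x : spf H q x <> PInf.
Proof. destruct (spf_cases x) as [[_ ->]|[s [-> _]]]; discriminate. Qed.

Lemma spf_superadditive x y :
  (forall h k, H h -> H k -> H (padd h k)) ->
  (forall h k, q h + q k <= q (padd h k)) ->
  ERle (ERplus (spf H q x) (spf H q y)) (spf H q (padd x y)).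
Proof.
intros HA q_supadd.
assert (Hadd : forall a b, feasible x a -> feasible y b ->
                 exists e, feasible (padd x y) e /\ a + b <= e).
{ intros a b [h [Hh [Hhx ->]]] [k [Hk [Hky ->]]]. exists (q (padd h k)).
  split; [exists (padd h k); split; [auto|split; [apply ple_add; auto|reflexivity]]|apply q_supadd]. }
destruct (spf_cases x) as [[_ ->]|[s1 [-> [Hs1 [r1 Hr1]]]]]; [exact I|].
destruct (spf_cases y) as [[_ ->]|[s2 [-> [Hs2 [r2 Hr2]]]]]; [exact I|].
destruct (spf_cases (padd x y)) as [[Hne _]|[s3 [-> [Hs3 _]]]].
- exfalso. destruct (Hadd r1 r2 Hr1 Hr2) as [e [He _]]. eauto.
- simpl.
  assert (Hx : forall a, feasible x a -> a <= s3 - s2).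
  { intros a Ha. assert (s2 <= s3 - a); [|lra]. apply (proj2 Hs2). intros b Hb.
    destruct (Hadd a b Ha Hb) as [e [He Hle]]. pose proof (proj1 Hs3 e He). lra. }
  pose proof (proj2 Hs1 _ Hx). lra.
Qed.

Lemma spf_homogeneous t x :
  (forall t h, 0 < t -> H h -> H (pscal t h)) ->
  (forall t h, 0 < t -> q (pscal t h) = t * q h) ->
  0 < t -> spf H q (pscal t x) = ERscal t (spf H q x).
Proof.
intros HS q_hom Ht.
assert (Hscal : forall t x r, 0 < t -> feasible x r -> feasible (pscal t x) (t * r)).
{ intros s z r Hs [h [Hh [Hhz ->]]]. exists (pscal s h).
  split; [auto|split; [apply ple_scal; [lra|exact Hhz]|symmetry; auto]]. }
assert (Hback : forall r, feasible (pscal t x) r -> feasible x (/ t * r)).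
{ intros r Hr. rewrite <- (pscal_invK t x) by lra.
  apply Hscal; [apply Rinv_0_lt_compat|]; assumption. }
destruct (spf_cases x) as [[Hne ->]|[s [-> [Hs [r0 Hr0]]]]].
- apply ERsup_empty. intros [r Hr]. apply Hne. exists (/ t * r). apply Hback, Hr.
- destruct (spf_cases (pscal t x)) as [[Hne _]|[s' [-> [Hs' _]]]].
  + exfalso. apply Hne. exists (t * r0). apply Hscal; auto.
  + simpl. f_equal. apply (is_lub_u (feasible (pscal t x))); [exact Hs'|].
    apply (is_lub_scale (feasible x)); auto.
Qed.

Lemma spf_eq_ERinf (X0 : Prod Xs -> Prop) (S : R -> Prop) x : X0 x ->
  (forall s, S s -> exists l, admissible H X0 q l /\ s = l x) ->
  (forall r, (forall h, H h -> ple h x -> q h < r) -> exists s, S s /\ s <= r) ->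
  spf H q x = ERinf S.
Proof.
intros Hx HS Hsep. apply (ERsup_eq_ERinf _ _ (q x)).
- intros e [h [_ [Hhx ->]]]. apply q_incr, Hhx.
- intros s e Hs [h [Hh [Hhx ->]]]. destruct (HS s Hs) as [l [Hl ->]]. apply Hl; auto.
- intros r Hr. apply Hsep. intros h Hh Hhx. apply Hr. exists h. auto.
Qed.

(** When [H] contains some [h0 <= 0], every [t h0] ([t > 0]) lies below each
    [x >= 0]; hence [spf H q] and admissible functionals are positive. *)
Section NegativeElement.
Variable h0 : Prod Xs.
Hypotheses (Hh0 : H h0) (Hh0neg : ple h0 pzero).
Hypothesis HS : forall t h, 0 < t -> H h -> H (pscal t h).
Hypothesis q_hom : forall t h, 0 < t -> q (pscal t h) = t * q h.

Lemma ray_below t x : 0 < t -> ple pzero x -> feasible x (t * q h0).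
Proof.
intros Ht Hx. exists (pscal t h0). split; [auto|split; [|symmetry; auto]].
apply ple_trans with pzero; [|exact Hx].
rewrite <- (pscal_zero t). apply ple_scal; [lra|exact Hh0neg].
Qed.

Lemma spf_pzero_finite : exists r, spf H q pzero = Fin r.
Proof.
destruct (spf_cases pzero) as [[Hne _]|[s [Hs _]]]; [|exists s; exact Hs].
exfalso. apply Hne. exists (q h0), h0. auto.
Qed.

Lemma spf_nonneg x : ple pzero x -> ERle (Fin 0) (spf H q x).
Proof.
intros Hx. destruct (spf_cases x) as [[Hne _]|[s [-> [Hs _]]]].
- exfalso. apply Hne. exists (1 * q h0). apply ray_below; [lra|exact Hx].
- apply (nonneg_of_scaled_bound s (q h0)). intros t Ht. apply (proj1 Hs), ray_below; auto.
Qed.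

Lemma admissible_positive (X0 : Prod Xs -> Prop) l : admissible H X0 q l -> positive_on Xs X0 l.
Proof.
intros Hl x Hx Hpos. apply (nonneg_of_scaled_bound _ (q h0)). intros t Ht.
destruct (ray_below t x Ht Hpos) as [h [Hh [Hhx ->]]]. apply Hl; auto.
Qed.

End NegativeElement.

End SupremalFunction.

Theorem mainTheorem9
  (Xs : nat -> VL) (p : forall n, Xs (S n) -> Xs n)
  (Hreg : regular_system Xs p) (Hred : reduced Xs p)
  (q1 : Xs 0%nat -> R)
  (q1_incr : forall a b : Xs 0%nat, vle a b -> q1 a <= q1 b)
  (q1_supadd : forall a b : Xs 0%nat, q1 a + q1 b <= q1 (vadd a b))
  (q1_hom : forall (t : R) (a : Xs 0%nat), 0 < t -> q1 (vscal t a) = t * q1 a)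
  (X0 H : Prod Xs -> Prop)
  (HX0 : subspace Xs p X0) (HH : convex_cone Xs p H)
  (* (i) *)
  (Hi : forall n, exists h, H h /\ vle (h n) vzero)
  (* (ii) *)
  (Hii : forall n x, X0 x -> exists h, H h /\ vle (h n) (x n))
  (* (v) *)
  (Hv : forall hk : nat -> Prod Xs,
      (forall k, H (hk k)) -> (forall k, ple (hk (S k)) (hk k)) ->
      forall m, is_glb (fun r => exists k, r = q1 (hk k 0%nat)) m ->
      (exists b, inLim p b /\ forall k, ple b (hk k)) /\
      (forall g, is_infX p (fun s => exists k, s = hk k) g -> m <= q1 (g 0%nat)))
  (* (iii-iv) *)
  (Hiii_iv : forall hk : nat -> Prod Xs,
      (forall k, H (hk k)) ->
      (exists a, inLim p a /\ forall k, ple (hk k) a) ->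
      (exists b, inLim p b /\ forall k, ple b (hk k)) ->
      exists (s : nat -> Prod Xs) (g : Prod Xs),
        (forall n, is_supX p (fun y => exists k, (n <= k)%nat /\ y = hk k) (s n)) /\
        is_infX p (fun y => exists n, y = s n) g /\ H g) :
  let q := fun x : Prod Xs => q1 (x 0%nat) in
  (* values in R ∪ {-oo} *)
  (forall x, inLim p x -> spf H q x <> PInf) /\
  (* superadditive *)
  (forall x y, inLim p x -> inLim p y ->
      ERle (ERplus (spf H q x) (spf H q y)) (spf H q (padd x y))) /\
  (* positively homogeneous *)
  (forall t x, 0 < t -> inLim p x -> spf H q (pscal t x) = ERscal t (spf H q x)) /\
  (* duality formula with all linear functionals on X0 *)
  (forall x, X0 x ->
      spf H q x =
      ERinf (fun r => exists l : Prod Xs -> R,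
               linear_on Xs X0 l /\
               (forall h x', H h -> X0 x' -> ple h x' -> q h <= l x') /\
               r = l x)) /\
  (* if H contains a vector h <= 0 *)
  ((exists h, H h /\ ple h pzero) ->
      (exists r, spf H q pzero = Fin r) /\
      (forall x, inLim p x -> ple pzero x -> ERle (Fin 0) (spf H q x)) /\
      (forall x, X0 x ->
         spf H q x =
         ERinf (fun r => exists l : Prod Xs -> R,
                  linear_on Xs X0 l /\ positive_on Xs X0 l /\
                  (forall h x', H h -> X0 x' -> ple h x' -> q h <= l x') /\
                  r = l x))).
Proof.
intros q.
pose proof HH as [_ [HA HS]].
assert (q_incr : forall h x, ple h x -> q h <= q x) by (intros h x Hhx; apply q1_incr, Hhx).
assert (q_supadd : forall h k, q h + q k <= q (padd h k)) by (intros h k; apply q1_supadd).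
assert (q_hom : forall t h, 0 < t -> q (pscal t h) = t * q h) by (intros t h Ht; apply q1_hom, Ht).
assert (Hsep := separation Xs p Hreg H HH Hiii_iv q1 q1_incr Hv q1_supadd q1_hom X0 HX0 Hii).
split; [intros x _; apply spf_not_PInf; exact q_incr|].
split; [intros x y _ _; apply spf_superadditive; assumption|].
split; [intros t x Ht _; apply spf_homogeneous; assumption|].
split.
- intros x Hx. apply (spf_eq_ERinf Xs H q q_incr X0); [exact Hx| |].
  + intros s [l [_ [Hl ->]]]. exists l. auto.
  + intros r Hr. destruct (Hsep x r Hx Hr) as [l [Hlin [Hl Hlx]]].
    exists (l x). split; [exists l; auto|exact Hlx].
- intros [h0 [Hh0 Hh0neg]]. split; [|split].
  + apply (spf_pzero_finite Xs H q q_incr h0); assumption.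
  + intros x _ Hx. apply (spf_nonneg Xs H q q_incr h0); assumption.
  + intros x Hx. apply (spf_eq_ERinf Xs H q q_incr X0); [exact Hx| |].
    * intros s [l [_ [_ [Hl ->]]]]. exists l. auto.
    * intros r Hr. destruct (Hsep x r Hx Hr) as [l [Hlin [Hl Hlx]]].
      exists (l x). split; [|exact Hlx].
      exists l. split; [exact Hlin|split; [|auto]].
      apply (admissible_positive Xs H q h0); assumption.
Qed.
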